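(* Let $f:\{0,1\}^n\to\{0,1\}$ be a total Boolean function. Then $\mathsf{maxPI}(f)\le\mathsf{sumPI}(f)^4$.
   Context: With $p=\{p_x\}$ ranging over families of probability distributions on $[n]$, $$\mathsf{sumPI}(f)=\min_{p}\ \max_{x,y:\ f(x)\neq f(y)} \frac{1}{\sum_{i:\,x_i\neq y_i}\sqrt{p_x(i)p_y(i)}},\qquad \mathsf{maxPI}(f)=\min_{p}\ \max_{x,y:\ f(x)\neq f(y)} \frac{1}{\max_{i:\,x_i\neq y_i}\sqrt{p_x(i)p_y(i)}}.$$ *)

From HB Require Import structures.
From mathcomp Require Import all_boot all_order all_algebra.
From mathcomp Require Import classical_sets boolp reals constructive_ereal ereal.
Set Implicit Arguments. Unset Strict Implicit. Unset Printing Implicit Defensive.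
Import Order.TTheory GRing.Theory Num.Theory.
Local Open Scope ring_scope.
Local Open Scope classical_set_scope.

Notation bitstr n := {ffun 'I_n -> bool}.

Definition prob_family (R : realType) (n : nat) (p : bitstr n -> 'I_n -> R) : Prop :=
  forall x, (forall i, 0 <= p x i) /\ \sum_(i < n) p x i = 1.

Definition inve (R : realType) (s : R) : \bar R :=
  if s == 0 then +oo%E else (s^-1)%:E.

(* objective of sumPI for a fixed family p: max over pairs with f x != f y
   (the max over an empty set of pairs is taken to be 0). *)
Definition sumPI_obj (R : realType) (n : nat) (f : bitstr n -> bool)
    (p : bitstr n -> 'I_n -> R) : \bar R :=
  \big[Order.max/0%E]_(xy : bitstr n * bitstr n | f xy.1 != f xy.2)
     inve (\sum_(i < n | xy.1 i != xy.2 i) Num.sqrt (p xy.1 i * p xy.2 i)).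

Definition maxPI_obj (R : realType) (n : nat) (f : bitstr n -> bool)
    (p : bitstr n -> 'I_n -> R) : \bar R :=
  \big[Order.max/0%E]_(xy : bitstr n * bitstr n | f xy.1 != f xy.2)
     inve (\big[Order.max/0]_(i < n | xy.1 i != xy.2 i) Num.sqrt (p xy.1 i * p xy.2 i)).

(* min over families p (taken as an infimum; it is attained by compactness). *)
Definition sumPI (R : realType) (n : nat) (f : bitstr n -> bool) : \bar R :=
  ereal_inf [set sumPI_obj f p | p in [set p | prob_family p]].

Definition maxPI (R : realType) (n : nat) (f : bitstr n -> bool) : \bar R :=
  ereal_inf [set maxPI_obj f p | p in [set p | prob_family p]].

From Pilot Require Import Defs.
From HB Require Import structures.
From mathcomp Require Import all_boot all_order all_algebra.
From mathcomp Require Import classical_sets boolp reals constructive_ereal ereal.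
From mathcomp Require Import ring lra.
Import Order.TTheory GRing.Theory Num.Theory.
Set Implicit Arguments. Unset Strict Implicit. Unset Printing Implicit Defensive.
Local Open Scope ring_scope.

(* Both quantities are compared with the block sensitivity bs(f).

   Upper bound: a maximal disjoint family of minimal sensitive blocks at x
   covers a certificate for x.  A minimal sensitive block has at most bs(f)
   bits (after flipping it, each of its bits alone is sensitive), so the
   certificate has at most bs(f)^2 bits; and the certificates of x and y with
   f x <> f y share a bit on which x and y differ, since otherwise the input
   agreeing with x on cert x and with y elsewhere would take both values.
   Uniform distributions on certificates then give maxPI(f) <= bs(f)^2.

   Lower bound: take x with k = bs(f) disjoint sensitive blocks B.  By AM-GM
   with weight sqrt k, the overlaps sum_(i in B) sqrt(p_x(i) p_(x^B)(i)) add
   up to at most sqrt k, so one of them is at most 1/sqrt k, and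
   sumPI(f) >= sqrt(bs(f)). *)

Section BlockSensitivity.
Variables (n : nat) (f : bitstr n -> bool).
Implicit Types (x y : bitstr n) (B C D : {set 'I_n}) (F : {set {set 'I_n}}).

Definition flip (x : bitstr n) (B : {set 'I_n}) : bitstr n :=
  [ffun i => if i \in B then ~~ x i else x i].

Definition sensitive x B := f (flip x B) != f x.

Definition sensitive_family x (F : {set {set 'I_n}}) :=
  [forall B in F, sensitive x B] && finset.trivIset F.

Definition bs_at x := (\max_(F | sensitive_family x F) #|F|)%N.

Definition bs := (\max_x bs_at x)%N.

Definition min_sensitive x B :=
  sensitive x B && [forall C : {set 'I_n}, (C \proper B) ==> ~~ sensitive x C].

Definition min_sensitive_family x (F : {set {set 'I_n}}) :=
  [forall B in F, min_sensitive x B] && finset.trivIset F.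

Definition cert_family x : {set {set 'I_n}} :=
  [arg max_(F > finset.set0 | min_sensitive_family x F) #|F|]%N.

Definition cert x := finset.cover (cert_family x).

Lemma flip_neq x B i : (x i != flip x B i) = (i \in B).
Proof. by rewrite ffunE; case: (i \in B); case: (x i). Qed.

Lemma flip_diff x y : flip x [set i | x i != y i] = y.
Proof. by apply/ffunP=> i; rewrite ffunE inE; case: (x i); case: (y i). Qed.

Lemma flip_set0 x : flip x finset.set0 = x.
Proof. by apply/ffunP=> i; rewrite ffunE inE. Qed.

Lemma sensitive_neq0 x B : sensitive x B -> B != finset.set0.
Proof. by apply: contraL => /eqP ->; rewrite /sensitive flip_set0 eqxx. Qed.

Lemma trivIset0 (T : finType) : finset.trivIset (finset.set0 : {set {set T}}).
Proof. exact: finset.trivIsetS (finset.sub0set _) (finset.trivIset1 finset.set0). Qed.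

Lemma sensitive_family_set0 x : sensitive_family x finset.set0.
Proof. by rewrite /sensitive_family trivIset0 andbT; apply/forall_inP=> B; rewrite inE. Qed.

Lemma min_sensitive_family_set0 x : min_sensitive_family x finset.set0.
Proof.
by rewrite /min_sensitive_family trivIset0 andbT; apply/forall_inP=> B; rewrite inE.
Qed.

Lemma bs_ge x F : sensitive_family x F -> (#|F| <= bs)%N.
Proof.
move=> sF; apply: leq_trans (leq_bigmax x).
exact: (@leq_bigmax_cond _ (sensitive_family x) (fun F => #|F|) F sF).
Qed.

Lemma bs_attained : exists x F, sensitive_family x F /\ #|F| = bs.
Proof.
have [x ->] : {x | bs = bs_at x}.
  by apply: bigop.eq_bigmax; apply/card_gt0P; exists [ffun => false].
have [F sF ->] : {F | F \in sensitive_family x & bs_at x = #|F|}.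
  apply: eq_bigmax_cond; apply/card_gt0P.
  by exists finset.set0; apply: sensitive_family_set0.
by exists x, F.
Qed.

(* Flipping the minimal block B takes x to z, at which every single bit of B is sensitive. *)
Lemma card_min_sensitive_le x B : min_sensitive x B -> (#|B| <= bs)%N.
Proof.
case/andP=> sB /forallP minB; pose z := flip x B.
suff /bs_ge : sensitive_family z [set [set i] | i in B].
  by rewrite card_imset //; apply: set1_inj.
apply/andP; split.
  apply/forall_inP => _ /imsetP [i iB ->]; rewrite /sensitive.
  have -> : flip z [set i] = flip x (B :\ i).
    apply/ffunP=> j; rewrite !ffunE !inE.
    by case: (j =P i) => [->|_]; rewrite ?iB //=; case: (x _).
  have /implyP/(_ (properD1 iB))/negbNE/eqP -> := minB (B :\ i).
  by rewrite eq_sym.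
apply/finset.trivIsetP => _ _ /imsetP [i _ ->] /imsetP [j _ ->].
by rewrite (inj_eq set1_inj) => ij; rewrite disjoint_sym disjoints1 inE eq_sym.
Qed.

Lemma cert_familyP x : min_sensitive_family x (cert_family x) /\
  forall F, min_sensitive_family x F -> (#|F| <= #|cert_family x|)%N.
Proof. by rewrite /cert_family; case: arg_maxnP; first exact: min_sensitive_family_set0. Qed.

Lemma card_cert_le x : (#|cert x| <= bs * bs)%N.
Proof.
have [/andP [/forall_inP minF trivF] _] := cert_familyP x.
apply: leq_trans (leq_card_cover _).1 _.
have : (\sum_(B in cert_family x) #|B| <= \sum_(B in cert_family x) bs)%N.
  by apply: leq_sum => B /minF /card_min_sensitive_le.
move/leq_trans; apply.
rewrite sum_nat_const leq_mul2r; apply/orP; right; apply: (@bs_ge x).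
by rewrite /sensitive_family trivF andbT; apply/forall_inP => B /minF /andP [].
Qed.

Lemma min_sensitive_sub x D : sensitive x D -> exists2 C, min_sensitive x C & C \subset D.
Proof.
move=> sD; have sDD : [pred C | sensitive x C & C \subset D] D by rewrite /= sD subxx.
case: (arg_minnP (fun C => #|C|) sDD) => C /andP [sC CD] minC; exists C => //.
apply/andP; split => //; apply/forallP => C'; apply/implyP => ltC'C.
apply: contraTN (proper_card ltC'C) => sC'; rewrite -leqNgt minC //=.
by rewrite sC' (fintype.subset_trans (proper_sub ltC'C)).
Qed.

(* A minimal sensitive block inside the disagreement set of x and y would avoid cert x,
   and could be added to the maximal family cert_family x. *)
Lemma cert_agree x y : {in cert x, forall i, x i = y i} -> f y = f x.
Proof.
move=> xy; apply/eqP; apply: contraT => fxy.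
have [C minC CD] : exists2 C, min_sensitive x C & C \subset [set i | x i != y i].
  by apply: min_sensitive_sub; rewrite /sensitive flip_diff.
have [/andP [/forall_inP minF trivF] maxF] := cert_familyP x.
have F0 : finset.set0 \notin cert_family x.
  by apply/negP => /minF /andP [] /sensitive_neq0; rewrite eqxx.
have disjC : {in cert_family x, forall B, [disjoint C & B]}.
  move=> B BF; rewrite -setI_eq0; apply/eqP/setP => i; rewrite !inE.
  apply/negP => /andP [/(fintype.subsetP CD)]; rewrite inE => /negP xyi iB.
  by apply/xyi/eqP/xy/bigcupP; exists B.
have [trivCF CF] := trivIsetU1 disjC trivF F0.
have := maxF (C |: cert_family x); rewrite cardsU1 CF ltnn; apply.
apply/andP; split => //; apply/forall_inP => B.
by rewrite in_setU1 => /orP [/eqP -> // | /minF].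
Qed.

Lemma cert_meet x y : f x != f y -> exists i, [/\ i \in cert x, i \in cert y & x i != y i].
Proof.
move=> fxy; apply/not_existsP => nomeet.
pose z : bitstr n := [ffun i => if i \in cert x then x i else y i].
have zx : f z = f x by apply: cert_agree => i ix; rewrite ffunE ix.
have zy : f z = f y.
  apply: cert_agree => i iy; rewrite ffunE; case: ifP => // ix.
  by apply/eqP; apply: contraT; rewrite eq_sym => xy; case: (nomeet i).
by move: fxy; rewrite -zx zy eqxx.
Qed.

End BlockSensitivity.

Section Overlaps.
Variable R : realType.

Lemma ler_sum_set n (A : {set 'I_n}) (q : 'I_n -> R) :
  (forall i, 0 <= q i) -> \sum_(i in A) q i <= \sum_i q i.
Proof. by move=> q0; rewrite [leRHS](bigID (mem A)) /= lerDl sumr_ge0. Qed.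

Lemma exists_le_mean (I : finType) (A : {set I}) (F : I -> R) : (0 < #|A|)%N ->
  exists2 i, i \in A & #|A|%:R * F i <= \sum_(j in A) F j.
Proof.
case/card_gt0P => i0 Ai0.
case: (arg_minP F Ai0) => i Ai minF; exists i => //.
by rewrite mulr_natl -sumr_const; apply: ler_sum.
Qed.

Lemma le_inve (a b : R) : 0 <= a -> a <= b -> (Defs.inve b <= Defs.inve a)%E.
Proof.
rewrite /Defs.inve le0r => /predU1P [-> | a_gt0 ab]; first by rewrite eqxx leey.
rewrite (gt_eqF a_gt0) (gt_eqF (lt_le_trans a_gt0 ab)) lee_fin.
by rewrite lef_pV2 ?posrE // (lt_le_trans a_gt0 ab).
Qed.

Lemma inveV (a : R) : 0 < a -> Defs.inve a^-1 = a%:E.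
Proof. by move=> a_gt0; rewrite /Defs.inve invr_eq0 (gt_eqF a_gt0) invrK. Qed.

Lemma prob_family_ord0 (p : bitstr 0 -> 'I_0 -> R) : ~ prob_family p.
Proof. by move=> /(_ [ffun => false]) [_]; rewrite big_ord0 => /eqP; rewrite eq_sym oner_eq0. Qed.

Definition unif n (A : {set 'I_n}) (i : 'I_n) : R := if i \in A then #|A|%:R^-1 else 0.

Lemma unif_ge0 n (A : {set 'I_n}) i : 0 <= unif A i.
Proof. by rewrite /unif; case: ifP; rewrite ?invr_ge0. Qed.

Lemma sum_unif n (A : {set 'I_n}) : A != finset.set0 -> \sum_i unif A i = 1.
Proof.
move=> A0; rewrite -big_mkcond /= sumr_const -[_ *+ _]mulr_natr mulVf //.
by rewrite pnatr_eq0 cards_eq0.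
Qed.

Lemma unif_overlap_ge n (A B : {set 'I_n}) (K : nat) i : i \in A -> i \in B ->
  (#|A| <= K)%N -> (#|B| <= K)%N -> K%:R^-1 <= Num.sqrt (unif A i * unif B i).
Proof.
move=> iA iB AK BK; rewrite /unif iA iB.
have A_gt0 : (0 < #|A|)%N by apply/card_gt0P; exists i.
have B_gt0 : (0 < #|B|)%N by apply/card_gt0P; exists i.
rewrite -[leLHS]ger0_norm ?invr_ge0 // -sqrtr_sqr ler_sqrt ?mulr_ge0 ?invr_ge0 //.
by rewrite expr2 ler_pM ?invr_ge0 // lef_pV2 ?posrE ?ltr0n ?ler_nat // (leq_trans _ AK).
Qed.

Lemma sqrtr_mul_le (a b s : R) : 0 <= a -> 0 <= b -> 0 < s ->
  Num.sqrt (a * b) <= s / 2 * a + (2 * s)^-1 * b.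
Proof.
move=> a0 b0 s0; rewrite sqrtrM // -[in leRHS](sqr_sqrtr a0) -[in leRHS](sqr_sqrtr b0).
move: (Num.sqrt a) (Num.sqrt b) (sqrtr_ge0 a) (sqrtr_ge0 b) => u v u0 v0.
have -> : s / 2 * u ^+ 2 + (2 * s)^-1 * v ^+ 2 = (s ^+ 2 * u ^+ 2 + v ^+ 2) / (2 * s).
  by field; rewrite gt_eqF.
rewrite ler_pdivlMr ?mulr_gt0 //.
have := sqr_ge0 (s * u - v); nra.
Qed.

Lemma sum_sqrt_mul_le n (A : {set 'I_n}) (p q : 'I_n -> R) (s : R) :
  (forall i, 0 <= p i) -> (forall i, 0 <= q i) -> \sum_i q i = 1 -> 0 < s ->
  \sum_(i in A) Num.sqrt (p i * q i) <= s / 2 * \sum_(i in A) p i + (2 * s)^-1.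
Proof.
move=> p_ge0 q_ge0 q1 s_gt0.
apply: le_trans (ler_sum _ (fun i _ => sqrtr_mul_le (p_ge0 i) (q_ge0 i) s_gt0)) _.
rewrite big_split /= -!mulr_sumr lerD2l ler_piMr //.
  by rewrite invr_ge0 mulr_ge0 // ltW.
by rewrite -q1; apply: ler_sum_set.
Qed.

End Overlaps.

Section Bounds.
Variables (R : realType) (n : nat) (f : bitstr n -> bool).

Lemma maxPI_le_bs2 : (0 < n)%N -> (maxPI R f <= ((bs f * bs f)%N%:R)%:E)%E.
Proof.
move=> n_gt0.
pose supp x := if cert f x == finset.set0 then [set: 'I_n] else cert f x.
pose p x := unif R (supp x).
have pf : prob_family p.
  move=> x; split=> [i|]; first exact: unif_ge0.
  apply: sum_unif; rewrite /supp; case: ifP => [_|/negbT //].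
  by apply/set0Pn; exists (Ordinal n_gt0); rewrite inE.
apply: ge_ereal_inf; exists (maxPI_obj f p); first by exists p.
apply: bigmax_le => [|[x y] /= fxy]; first by rewrite lee_fin ler0n.
have [i [ix iy xy]] := cert_meet fxy.
have suppE z : i \in cert f z -> supp z = cert f z.
  by rewrite /supp; case: eqP => // ->; rewrite inE.
have K_gt0 : 0 < (bs f * bs f)%N%:R :> R.
  by rewrite ltr0n (leq_trans _ (card_cert_le f x)) //; apply/card_gt0P; exists i.
have := unif_overlap_ge R ix iy (card_cert_le f x) (card_cert_le f y).
rewrite -(suppE x ix) -(suppE y iy) => le_overlap.
rewrite -(inveV K_gt0); apply: le_inve; first by rewrite invr_ge0 ltW.
by apply: le_trans le_overlap _; apply: le_bigmax_cond.
Qed.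

Lemma sqrt_bs_le_sumPI : ((Num.sqrt (bs f)%:R)%:E <= sumPI R f)%E.
Proof.
apply: le_ereal_inf_tmp => _ [p pf <-].
have [x [F [/andP [/forall_inP sensF trivF] <-]]] := bs_attained f.
have [->|k_gt0] := posnP #|F|; first by rewrite sqrtr0; apply: bigmax_ge_id.
set k := #|F|; set s := Num.sqrt k%:R.
have s_gt0 : 0 < s by rewrite sqrtr_gt0 ltr0n.
have ks : k%:R = s ^+ 2 by rewrite sqr_sqrtr ?ler0n.
have [px_ge0 px1] := pf x.
pose S B := \sum_(i < n | x i != flip x B i) Num.sqrt (p x i * p (flip x B) i).
have S_le B : S B <= s / 2 * \sum_(i in B) p x i + (2 * s)^-1.
  have [py_ge0 py1] := pf (flip x B).
  rewrite /S (eq_bigl (fun i => i \in B)) => [|i]; last by rewrite flip_neq.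
  exact: sum_sqrt_mul_le.
have sum_S : \sum_(B in F) S B <= s.
  apply: le_trans (ler_sum _ (fun B _ => S_le B)) _.
  rewrite big_split /= -mulr_sumr sumr_const -big_trivIset // -[_ *+ k]mulr_natl ks.
  have := ler_sum_set (finset.cover F) px_ge0; rewrite px1.
  have : 0 <= \sum_(i in finset.cover F) p x i by apply: sumr_ge0.
  have -> : s ^+ 2 * (2 * s)^-1 = s / 2 by field; rewrite gt_eqF.
  nra.
have [B BF kSB] := exists_le_mean S k_gt0.
have SB_le : S B <= s^-1.
  rewrite -(ler_pM2l s_gt0) mulfV ?gt_eqF // -(ler_pM2l s_gt0) mulr1 mulrA -expr2 -ks.
  exact: le_trans kSB sum_S.
apply: le_trans (_ : Defs.inve (S B) <= _)%E.
  by rewrite -(inveV s_gt0); apply: le_inve SB_le; apply: sumr_ge0 => i _; apply: sqrtr_ge0.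
have fxB : f (x, flip x B).1 != f (x, flip x B).2 by rewrite /= eq_sym; apply: sensF.
exact: (@le_bigmax_cond _ _ _ 0%E (x, flip x B) (fun xy => f xy.1 != f xy.2) _ fxB).
Qed.

End Bounds.

Lemma sumPI_ord0 (R : realType) (f : bitstr 0 -> bool) : sumPI R f = +oo%E.
Proof. by apply/ereal_inf_pinfty => y [p pf _]; case: (prob_family_ord0 pf). Qed.

Theorem mainTheorem13 (R : realType) (n : nat) (f : {ffun 'I_n -> bool} -> bool) :
  (maxPI R f <= sumPI R f * sumPI R f * sumPI R f * sumPI R f)%E.
Proof.
case: n f => [|n] f; first by rewrite sumPI_ord0 !mulyy leey.
set s := Num.sqrt ((bs f)%:R : R).
have bsE : (bs f)%:R = s * s by rewrite -expr2 sqr_sqrtr ?ler0n.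
have s_ge0 : (0 <= s%:E)%E by rewrite lee_fin sqrtr_ge0.
have s_le := sqrt_bs_le_sumPI R f.
apply: le_trans (maxPI_le_bs2 R f isT) _.
rewrite natrM bsE !mulrA !EFinM.
apply: lee_pmul => //; first by rewrite !mule_ge0.
apply: lee_pmul => //; first by rewrite mule_ge0.
exact: lee_pmul.
Qed.
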